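(* Let $c\in V$ be tight and let $x_1,x_2\ge 0$. Then (1) $\operatorname{proj}_X(\operatorname{proj}_X(c,x_1),x_2)=\operatorname{proj}_X(c,\min\{x_1,x_2\})$, and (2) $\operatorname{shrink}_X(\operatorname{shrink}_X(c,x_1),x_2)=\operatorname{shrink}_X(c,x_1+x_2)$.
   Context: $V$ is a finite dimensional real vector space with a positive definite symmetric bilinear form $\langle\cdot,\cdot\rangle$, $\|v\|_2=\sqrt{\langle v,v\rangle}$; $\|\cdot\|_X$ is a norm on $V$ with dual norm $\|v\|_Y=\max\{\langle v,w\rangle:\|w\|_X=1\}$. For $x\ge0$, $B_X(x)=\{v:\|v\|_X\le x\}$, $\operatorname{proj}_X(c,x)$ is the unique point of $B_X(x)$ closest to $c$ in $\|\cdot\|_2$, and $\operatorname{shrink}_X(c,x)=c-\operatorname{proj}_X(c,x)$. For norms $\|\cdot\|_P,\|\cdot\|_Q$ (among $X,Y,2$), $c=a+b$ is a $PQ$-decomposition if for every decomposition $c=a'+b'$: $\|a'\|_P>\|a\|_P$, or $\|b'\|_Q>\|b\|_Q$, or $(\|a'\|_P,\|b'\|_Q)=(\|a\|_P,\|b\|_Q)$. The vector $c$ is tight if every $X2$-decomposition of $c$ is an $XY$-decomposition. *)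

(* classical reals. V is modelled as R^n = (Fin.t n -> R),
   with an ARBITRARY positive definite symmetric bilinear form ip and an
   ARBITRARY norm nX on it. *)
From Stdlib Require Fin.
From Stdlib Require Import Reals FunctionalExtensionality ClassicalEpsilon.
Open Scope R_scope.

Definition vec (n : nat) := Fin.t n -> R.

Definition vadd {n} (u v : vec n) : vec n := fun i => u i + v i.
Definition vsub {n} (u v : vec n) : vec n := fun i => u i - v i.
Definition vscale {n} (a : R) (u : vec n) : vec n := fun i => a * u i.
Definition vzero {n} : vec n := fun _ => 0.

Definition is_inner_product {n} (ip : vec n -> vec n -> R) : Prop :=
  (forall u v, ip u v = ip v u) /\
  (forall u v w, ip (vadd u v) w = ip u w + ip v w) /\
  (forall a u w, ip (vscale a u) w = a * ip u w) /\
  (forall v, v <> vzero -> 0 < ip v v).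

Definition is_norm {n} (N : vec n -> R) : Prop :=
  (forall v, N v = 0 -> v = vzero) /\
  (forall a v, N (vscale a v) = Rabs a * N v) /\
  (forall u v, N (vadd u v) <= N u + N v).

Definition norm2 {n} (ip : vec n -> vec n -> R) (v : vec n) : R := sqrt (ip v v).

Definition dualnorm {n} (ip : vec n -> vec n -> R) (nX : vec n -> R) (v : vec n) : R :=
  epsilon (inhabits 0%R)
    (fun y => (exists w, nX w = 1 /\ ip v w = y) /\
              (forall w, nX w = 1 -> ip v w <= y)).

Definition projX {n} (ip : vec n -> vec n -> R) (nX : vec n -> R) (c : vec n) (x : R) : vec n :=
  epsilon (inhabits vzero)
    (fun p => nX p <= x /\
              forall q, nX q <= x -> norm2 ip (vsub c p) <= norm2 ip (vsub c q)).

Definition shrinkX {n} (ip : vec n -> vec n -> R) (nX : vec n -> R) (c : vec n) (x : R) : vec n :=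
  vsub c (projX ip nX c x).

Definition is_decomp {n} (P Q : vec n -> R) (c a b : vec n) : Prop :=
  vadd a b = c /\
  forall a' b', vadd a' b' = c ->
    P a' > P a \/ Q b' > Q b \/ (P a' = P a /\ Q b' = Q b).

Definition tight {n} (ip : vec n -> vec n -> R) (nX : vec n -> R) (c : vec n) : Prop :=
  forall a b, is_decomp nX (norm2 ip) c a b -> is_decomp nX (dualnorm ip nX) c a b.

(* Write f_v(t) = |v - proj_X(v,t)|_2^2 and h_v(t) = |v - proj_X(v,t)|_Y.  Then f_v is
   differentiable with f_v' = -2 h_v, and tightness of c says that c - proj_X(c,s) has the
   least Y-norm among all c - q with |q|_X <= s.
   (2) With b = shrink_X(c,x1), tightness gives h_c(x1 + t) <= h_b(t), so f_c(x1 + t) - f_b(t)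
   is nondecreasing; it vanishes at t = 0, hence f_b(x2) <= f_c(x1 + x2) and
   proj_X(c,x1) + proj_X(b,x2) is the projection of c at level x1 + x2.
   (1) For x2 < x1 and a = proj_X(c,x1), tightness gives h_c(s) <= h_c(x1) + h_a(s); comparing
   f_c and f_a on [x2, x1] bounds |a - proj_X(c,x2)|_2^2 by f_a(x2), so proj_X(c,x2) is the
   projection of a at level x2.
   Derivatives are replaced by difference quotients with O(D^2) error, which suffice for the
   monotonicity arguments.  Existence of projections and of the maximum defining |.|_Y comes
   from compactness of norm balls in coordinates. *)

From Stdlib Require Import Reals Lra Psatz FunctionalExtensionality Classical ClassicalEpsilon.
From mathcomp Require all_boot all_order all_algebra boolp classical_sets.
From mathcomp Require topology normedtype derive Rstruct Rstruct_topology.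
Open Scope R_scope.

Definition coordwise_close {n} (v w : vec n) (d : R) : Prop := forall i, Rabs (v i - w i) < d.

Definition coordwise_bounded {n} (A : vec n -> Prop) : Prop :=
  exists M, forall v, A v -> forall i, Rabs (v i) <= M.

Definition coordwise_closed {n} (A : vec n -> Prop) : Prop :=
  forall v, (forall eps, 0 < eps -> exists w, A w /\ coordwise_close v w eps) -> A v.

Definition coordwise_continuous {n} (f : vec n -> R) : Prop :=
  forall v eps, 0 < eps ->
    exists delta, 0 < delta /\ forall w, coordwise_close v w delta -> Rabs (f v - f w) < eps.

Module Compactness.
Import all_boot all_order all_algebra boolp classical_sets.
Import topology normedtype derive Rstruct Rstruct_topology.
Import Order.TTheory GRing.Theory Num.Theory numFieldNormedType.Exports.
Local Open Scope ring_scope.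
Local Open Scope classical_set_scope.

Section RowVectors.
Variable n : nat.

Definition fin_to_ord (j : Fin.t n) : 'I_n := Ordinal (introT ssrnat.ltP (proj2_sig (Fin.to_nat j))).
Definition ord_to_fin (i : 'I_n) : Fin.t n := Fin.of_nat_lt (elimT ssrnat.ltP (ltn_ord i)).

Lemma ord_to_finK : cancel ord_to_fin fin_to_ord.
Proof. by move=> i; apply/val_inj; rewrite /= /ord_to_fin Fin.to_nat_of_nat. Qed.

Lemma fin_to_ordK : cancel fin_to_ord ord_to_fin.
Proof.
move=> j; rewrite /ord_to_fin /fin_to_ord /=.
set H := elimT _ _.
have -> : H = proj2_sig (Fin.to_nat j) by apply: Classical_Prop.proof_irrelevance.
exact: Fin.of_nat_to_nat_inv.
Qed.

Definition rV_of_vec (v : vec n) : 'rV[R]_n := \row_(i < n) v (ord_to_fin i).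
Definition vec_of_rV (r : 'rV[R]_n) : vec n := fun j => r ord0 (fin_to_ord j).

Lemma rV_of_vecK : cancel rV_of_vec vec_of_rV.
Proof. by move=> v; apply: functional_extensionality => j; rewrite /vec_of_rV mxE fin_to_ordK. Qed.

Lemma ball_coordwise_close (r w : 'rV[R]_n) (e : R) :
  ball r e w -> coordwise_close (vec_of_rV r) (vec_of_rV w) e.
Proof.
rewrite mx_norm_ball /ball_ /= => brw i; apply/RltP; apply: le_lt_trans brw.
have -> : `|r - w| = mx_norm (r - w) by [].
rewrite mx_normrE; apply/bigmax_geP; right => /=; exists (ord0, fin_to_ord i) => //.
by rewrite !mxE.
Qed.

Lemma coord_min_attained (f : vec n -> R) (A : vec n -> Prop) :
  (exists a, A a) -> coordwise_bounded A -> coordwise_closed A -> coordwise_continuous f ->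
  exists a, A a /\ forall v, A v -> Rle (f a) (f v).
Proof.
move=> [a Aa] [M HM] Hcl Hco.
pose A' := [set r : 'rV[R]_n | A (vec_of_rV r)].
pose f' r := f (vec_of_rV r).
have A'0 : A' !=set0 by exists (rV_of_vec a); rewrite /A' /= rV_of_vecK.
have A'c : compact A'.
  apply: bounded_closed_compact.
  - rewrite /bounded_set /bounded_near /=; near=> M' => r Ar /=.
    have -> : `|r| = mx_norm r by [].
    have [->|/mx_norm_neq0 [[i j] /= ->]] := eqVneq (mx_norm r) 0.
      by near: M'; apply: nbhs_pinfty_ge.
    rewrite (ord1 i) -[j]ord_to_finK; apply: (le_trans (y := M)).
      by apply/RleP; exact: HM Ar _.
    by near: M'; apply: nbhs_pinfty_ge; exact: num_real.
  - move=> r clr; apply: Hcl => e /RltP e0.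
    have [w [Aw brw]] := clr (ball r e) (nbhsx_ballx r e e0).
    by exists (vec_of_rV w); split => //; apply: ball_coordwise_close.
have f'c : {within A', continuous f'}.
  apply: continuous_subspaceT => r.
  apply/(@cvgrPdist_lt R R^o _ (nbhs r) (nbhs_filter r) f' (f' r)) => e /RltP e0.
  have [d [/RltP d0 Hd]] := Hco (vec_of_rV r) e e0.
  apply/nbhs_ballP; exists d => // w brw /=.
  by apply/RltP; apply: Hd; apply: ball_coordwise_close.
have [r Ar rmin] := EVT_min_rV A'0 A'c f'c.
exists (vec_of_rV r); split; first by rewrite inE in Ar.
move=> v Av; apply/RleP; rewrite -[v]rV_of_vecK; apply: rmin.
by rewrite inE /A' /= rV_of_vecK.
Unshelve. all: by end_near.
Qed.

End RowVectors.
End Compactness.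

(** * Coordinates *)

Fixpoint fin_sum (m : nat) : (Fin.t m -> R) -> R :=
  match m with
  | O => fun _ => 0
  | S k => fun g => g Fin.F1 + fin_sum k (fun i => g (Fin.FS i))
  end.

Lemma fin_sum_ext m (f g : Fin.t m -> R) : (forall i, f i = g i) -> fin_sum m f = fin_sum m g.
Proof.
  revert f g; induction m; intros f g H; simpl; auto.
  rewrite H, (IHm _ (fun i => g (Fin.FS i))); auto.
Qed.

Lemma fin_sum_le m (f g : Fin.t m -> R) : (forall i, f i <= g i) -> fin_sum m f <= fin_sum m g.
Proof.
  revert f g; induction m; intros f g H; simpl; [lra|].
  specialize (IHm (fun i => f (Fin.FS i)) (fun i => g (Fin.FS i)) (fun i => H (Fin.FS i))).
  specialize (H Fin.F1). lra.
Qed.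

Lemma fin_sum_const m d : fin_sum m (fun _ => d) = INR m * d.
Proof. induction m; simpl fin_sum; [simpl; ring|]. rewrite IHm, S_INR. ring. Qed.

Lemma fin_sum_nonneg m (f : Fin.t m -> R) : (forall i, 0 <= f i) -> 0 <= fin_sum m f.
Proof.
  intros H. replace 0 with (fin_sum m (fun _ => 0)) by (rewrite fin_sum_const; ring).
  apply fin_sum_le; auto.
Qed.

Lemma fin_sum_add m (f g : Fin.t m -> R) :
  fin_sum m (fun i => f i + g i) = fin_sum m f + fin_sum m g.
Proof. revert f g; induction m; intros f g; simpl; [ring|]. rewrite IHm. ring. Qed.

Lemma fin_sum_scal m a (f : Fin.t m -> R) : fin_sum m (fun i => a * f i) = a * fin_sum m f.
Proof. revert f; induction m; intros f; simpl; [ring|]. rewrite IHm. ring. Qed.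

Lemma Rabs_fin_sum m (f : Fin.t m -> R) : Rabs (fin_sum m f) <= fin_sum m (fun i => Rabs (f i)).
Proof.
  revert f; induction m; intros f; simpl.
  - rewrite Rabs_R0; lra.
  - eapply Rle_trans; [apply Rabs_triang|]. specialize (IHm (fun i => f (Fin.FS i))). lra.
Qed.

Lemma le_fin_sum m (f : Fin.t m -> R) i : (forall j, 0 <= f j) -> f i <= fin_sum m f.
Proof.
  revert f i; induction m; intros f i H; [inversion i|].
  simpl. pattern i; apply Fin.caseS'.
  - pose proof (fin_sum_nonneg m (fun j => f (Fin.FS j)) (fun j => H (Fin.FS j))). lra.
  - intros p. specialize (IHm (fun j => f (Fin.FS j)) p (fun j => H (Fin.FS j))).
    specialize (H Fin.F1). simpl in IHm. lra.
Qed.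

Definition unit_vec {n} (i : Fin.t n) : vec n := fun j => if Fin.eq_dec i j then 1 else 0.

Lemma fin_sum_unit_vec m (v : vec m) j : fin_sum m (fun i => v i * unit_vec i j) = v j.
Proof.
  unfold unit_vec; revert v j; induction m; intros v j; [inversion j|].
  simpl. pattern j; apply Fin.caseS'.
  - destruct (Fin.eq_dec Fin.F1 Fin.F1) as [_|C]; [|congruence].
    rewrite (fin_sum_ext m _ (fun _ => 0)), fin_sum_const; [ring|].
    intros i. destruct (Fin.eq_dec (Fin.FS i) Fin.F1) as [E|_]; [discriminate E|ring].
  - intros p. destruct (Fin.eq_dec Fin.F1 (Fin.FS p)) as [E|_]; [discriminate E|].
    rewrite <- (IHm (fun i => v (Fin.FS i)) p). rewrite Rmult_0_r, Rplus_0_l.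
    apply fin_sum_ext; intros i.
    destruct (Fin.eq_dec (Fin.FS i) (Fin.FS p)) as [E|E], (Fin.eq_dec i p) as [E'|E']; auto.
    + apply Fin.FS_inj in E. congruence.
    + subst. congruence.
Qed.

Definition vsum {n} m (g : Fin.t m -> vec n) : vec n := fun j => fin_sum m (fun i => g i j).

Lemma vec_ext {n} (u v : vec n) : (forall i, u i = v i) -> u = v.
Proof. intros H; apply functional_extensionality; auto. Qed.

Lemma vec_unit_decomp {n} (v : vec n) : v = vsum n (fun i => vscale (v i) (unit_vec i)).
Proof. apply vec_ext; intros j. unfold vsum, vscale. symmetry. apply fin_sum_unit_vec. Qed.

Lemma vsum_S {n} m (g : Fin.t (S m) -> vec n) :
  vsum (S m) g = vadd (g Fin.F1) (vsum m (fun i => g (Fin.FS i))).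
Proof. apply vec_ext; intros; reflexivity. Qed.

Lemma vsum_O {n} (g : Fin.t 0 -> vec n) : vsum 0 g = vzero.
Proof. apply vec_ext; intros; reflexivity. Qed.

Definition l1norm {n} (v : vec n) : R := fin_sum n (fun i => Rabs (v i)).

Lemma l1norm_ge0 {n} (v : vec n) : 0 <= l1norm v.
Proof. apply fin_sum_nonneg; intros; apply Rabs_pos. Qed.

Lemma Rabs_coord_le_l1norm {n} (v : vec n) i : Rabs (v i) <= l1norm v.
Proof. apply (le_fin_sum n (fun j => Rabs (v j))); intros; apply Rabs_pos. Qed.

Lemma l1norm_scale {n} a (v : vec n) : l1norm (vscale a v) = Rabs a * l1norm v.
Proof. unfold l1norm, vscale. rewrite <- fin_sum_scal. apply fin_sum_ext; intros; apply Rabs_mult. Qed.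

Lemma l1norm_add {n} (u v : vec n) : l1norm (vadd u v) <= l1norm u + l1norm v.
Proof. unfold l1norm, vadd. rewrite <- fin_sum_add. apply fin_sum_le; intros; apply Rabs_triang. Qed.

Lemma l1norm_sub_sym {n} (u v : vec n) : l1norm (vsub u v) = l1norm (vsub v u).
Proof. unfold l1norm, vsub. apply fin_sum_ext; intros; apply Rabs_minus_sym. Qed.

Lemma l1norm_close {n} (v w : vec n) d : coordwise_close v w d -> l1norm (vsub v w) <= INR n * d.
Proof. intros H. rewrite <- fin_sum_const. apply fin_sum_le; intros i. left; apply H. Qed.


Lemma coordwise_continuous_opp {n} (f : vec n -> R) :
  coordwise_continuous f -> coordwise_continuous (fun v => - f v).
Proof.
  intros Hf v eps He. destruct (Hf v eps He) as [d [Hd Hw]].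
  exists d; split; auto. intros w Hvw. rewrite <- Rabs_Ropp. specialize (Hw w Hvw).
  replace (- (- f v - - f w)) with (f v - f w) by ring. exact Hw.
Qed.

Lemma coordwise_continuous_of_lipschitz {n} (f : vec n -> R) :
  (forall v, exists L, 0 <= L /\
     forall w, coordwise_close v w 1 -> Rabs (f v - f w) <= L * l1norm (vsub v w)) ->
  coordwise_continuous f.
Proof.
  intros Hf v eps He. destruct (Hf v) as [L [HL Hlip]].
  pose proof (pos_INR n) as Hn.
  set (e := eps / (L * INR n + 1)).
  assert (He' : 0 < e) by (apply Rdiv_lt_0_compat; nra).
  assert (HLe : L * INR n * e = eps - e) by (unfold e; field; nra).
  exists (Rmin 1 e). split; [apply Rmin_pos; lra|].
  intros w Hw. pose proof (Rmin_l 1 e). pose proof (Rmin_r 1 e).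
  assert (Hw1 : coordwise_close v w 1) by (intros i; specialize (Hw i); lra).
  pose proof (l1norm_close v w _ Hw).
  assert (L * l1norm (vsub v w) <= L * (INR n * e)) by (apply Rmult_le_compat_l; nra).
  specialize (Hlip w Hw1). nra.
Qed.

Lemma le_of_coordwise_approx {n} (f : vec n -> R) x v : coordwise_continuous f ->
  (forall eps, 0 < eps -> exists w, f w <= x /\ coordwise_close v w eps) -> f v <= x.
Proof.
  intros Hf Happ. destruct (Rle_lt_dec (f v) x) as [|Hlt]; auto. exfalso.
  destruct (Hf v (f v - x)) as [d [Hd Hw]]; [lra|].
  destruct (Happ d Hd) as [w [Hfw Hvw]]. specialize (Hw w Hvw).
  apply Rabs_def2 in Hw. lra.
Qed.

Lemma coordwise_closed_le {n} (f : vec n -> R) x :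
  coordwise_continuous f -> coordwise_closed (fun v => f v <= x).
Proof.
  intros Hf v Happ. apply (le_of_coordwise_approx f); auto.
Qed.

Lemma coordwise_closed_eq {n} (f : vec n -> R) x :
  coordwise_continuous f -> coordwise_closed (fun v => f v = x).
Proof.
  intros Hf v Happ. apply Rle_antisym.
  - apply (le_of_coordwise_approx f); auto.
    intros eps He. destruct (Happ eps He) as [w [Hw Hvw]]. exists w. split; [lra|auto].
  - assert (- f v <= - x); [|lra].
    apply (le_of_coordwise_approx (fun v => - f v)); [apply coordwise_continuous_opp; auto|].
    intros eps He. destruct (Happ eps He) as [w [Hw Hvw]]. exists w. split; [lra|auto].
Qed.

Lemma l1norm_continuous n : coordwise_continuous (@l1norm n).
Proof.
  apply coordwise_continuous_of_lipschitz. intros v. exists 1. split; [lra|]. intros w _.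
  rewrite Rmult_1_l. apply Rabs_le. split.
  - pose proof (l1norm_add (vsub w v) v).
    replace (vadd (vsub w v) v) with w in H by (apply vec_ext; intros; unfold vadd, vsub; ring).
    rewrite l1norm_sub_sym in H. lra.
  - pose proof (l1norm_add (vsub v w) w).
    replace (vadd (vsub v w) w) with v in H by (apply vec_ext; intros; unfold vadd, vsub; ring). lra.
Qed.

Lemma linear_vsum {n} (L : vec n -> R) :
  (forall u v, L (vadd u v) = L u + L v) -> (forall a u, L (vscale a u) = a * L u) ->
  forall m (g : Fin.t m -> vec n), L (vsum m g) = fin_sum m (fun i => L (g i)).
Proof.
  intros Ladd Lscale. induction m; intros g.
  - rewrite vsum_O. replace (@vzero n) with (vscale 0 (@vzero n))
      by (apply vec_ext; intros; unfold vscale, vzero; ring).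
    rewrite Lscale. simpl; ring.
  - rewrite vsum_S, Ladd, IHm. reflexivity.
Qed.

Lemma Rabs_linear_le {n} (L : vec n -> R) :
  (forall u v, L (vadd u v) = L u + L v) -> (forall a u, L (vscale a u) = a * L u) ->
  forall v, Rabs (L v) <= l1norm v * fin_sum n (fun i => Rabs (L (unit_vec i))).
Proof.
  intros Ladd Lscale v. rewrite (vec_unit_decomp v) at 1. rewrite (linear_vsum L Ladd Lscale).
  eapply Rle_trans; [apply Rabs_fin_sum|]. rewrite <- fin_sum_scal. apply fin_sum_le; intros i.
  rewrite Lscale, Rabs_mult. apply Rmult_le_compat_r; [apply Rabs_pos|apply Rabs_coord_le_l1norm].
Qed.

(** * Inner products *)

Section InnerProduct.
Variable n : nat.
Variable ip : vec n -> vec n -> R.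
Hypothesis Hip : is_inner_product ip.

Lemma ip_sym u v : ip u v = ip v u.
Proof. apply Hip. Qed.
Lemma ip_addl u v w : ip (vadd u v) w = ip u w + ip v w.
Proof. apply Hip. Qed.
Lemma ip_scalel a u w : ip (vscale a u) w = a * ip u w.
Proof. apply Hip. Qed.
Lemma ip_addr u v w : ip u (vadd v w) = ip u v + ip u w.
Proof. rewrite ip_sym, ip_addl, (ip_sym v), (ip_sym w); ring. Qed.
Lemma ip_scaler a u w : ip u (vscale a w) = a * ip u w.
Proof. rewrite ip_sym, ip_scalel, ip_sym; ring. Qed.

Lemma vsub_vadd_opp (u v : vec n) : vsub u v = vadd u (vscale (-1) v).
Proof. apply vec_ext; intros i; unfold vsub, vadd, vscale; ring. Qed.

Lemma ip_subl u v w : ip (vsub u v) w = ip u w - ip v w.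
Proof. rewrite vsub_vadd_opp, ip_addl, ip_scalel; ring. Qed.
Lemma ip_subr u v w : ip u (vsub v w) = ip u v - ip u w.
Proof. rewrite ip_sym, ip_subl, (ip_sym v), (ip_sym w); ring. Qed.
Lemma ip_0l w : ip vzero w = 0.
Proof.
  replace (@vzero n) with (vscale 0 (@vzero n)) by (apply vec_ext; intros; unfold vscale, vzero; ring).
  rewrite ip_scalel; ring.
Qed.
Lemma ip_0r w : ip w vzero = 0.
Proof. rewrite ip_sym; apply ip_0l. Qed.

Definition sqnorm (v : vec n) : R := ip v v.

Lemma sqnorm_ge0 v : 0 <= sqnorm v.
Proof.
  destruct (classic (v = vzero)) as [->|Hv].
  - unfold sqnorm. rewrite ip_0l. lra.
  - left; apply Hip; auto.
Qed.
Lemma sqnorm_le0 v : sqnorm v <= 0 -> v = vzero.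
Proof.
  intros H. apply NNPP; intros Hv. assert (0 < sqnorm v) by (apply Hip; auto). lra.
Qed.
Lemma sqnorm_0 : sqnorm vzero = 0.
Proof. apply ip_0l. Qed.
Lemma sqnorm_add u v : sqnorm (vadd u v) = sqnorm u + 2 * ip u v + sqnorm v.
Proof. unfold sqnorm. rewrite ip_addl, !ip_addr, (ip_sym v u). ring. Qed.
Lemma sqnorm_sub u v : sqnorm (vsub u v) = sqnorm u - 2 * ip u v + sqnorm v.
Proof. unfold sqnorm. rewrite ip_subl, !ip_subr, (ip_sym v u). ring. Qed.
Lemma sqnorm_scale a v : sqnorm (vscale a v) = a * a * sqnorm v.
Proof. unfold sqnorm. rewrite ip_scalel, ip_scaler. ring. Qed.

Lemma norm2_le_iff u v : norm2 ip u <= norm2 ip v <-> sqnorm u <= sqnorm v.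
Proof.
  split; intros H.
  - apply sqrt_le_0; auto; apply sqnorm_ge0.
  - apply sqrt_le_1_alt; exact H.
Qed.

Lemma Rabs_ip_le : exists B, 0 <= B /\ forall u w, Rabs (ip u w) <= B * l1norm u * l1norm w.
Proof.
  exists (fin_sum n (fun i => fin_sum n (fun j => Rabs (ip (unit_vec i) (unit_vec j))))).
  split; [apply fin_sum_nonneg; intros; apply fin_sum_nonneg; intros; apply Rabs_pos|].
  intros u w.
  eapply Rle_trans; [apply (Rabs_linear_le (fun x => ip x w)); intros; [apply ip_addl|apply ip_scalel]|].
  rewrite (Rmult_comm _ (l1norm u)), Rmult_assoc, (Rmult_comm _ (l1norm w)).
  apply Rmult_le_compat_l; [apply l1norm_ge0|]. rewrite <- fin_sum_scal. apply fin_sum_le; intros i.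
  apply (Rabs_linear_le (fun x => ip (unit_vec i) x)); intros; [apply ip_addr|apply ip_scaler].
Qed.

Lemma ip_continuous v : coordwise_continuous (fun w => ip v w).
Proof.
  destruct Rabs_ip_le as [B [HB Hbound]].
  apply coordwise_continuous_of_lipschitz. intros w. exists (B * l1norm v).
  split; [apply Rmult_le_pos; auto; apply l1norm_ge0|]. intros w' _.
  rewrite <- ip_subr. apply Hbound.
Qed.

Lemma sqnorm_sub_continuous c : coordwise_continuous (fun q => sqnorm (vsub c q)).
Proof.
  destruct Rabs_ip_le as [B [HB Hbound]].
  apply coordwise_continuous_of_lipschitz. intros v.
  exists (B * (2 * l1norm (vsub c v) + INR n)).
  pose proof (l1norm_ge0 (vsub c v)). pose proof (pos_INR n).
  split; [apply Rmult_le_pos; lra|]. intros w Hw.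
  replace (sqnorm (vsub c v) - sqnorm (vsub c w)) with (ip (vsub w v) (vadd (vsub c v) (vsub c w))).
  2:{ unfold sqnorm. rewrite ip_subl, !ip_addr, !ip_subr, !ip_subl, (ip_sym v c), (ip_sym w c), (ip_sym v w).
      ring. }
  assert (Hsum : l1norm (vadd (vsub c v) (vsub c w)) <= 2 * l1norm (vsub c v) + INR n).
  { assert (Ecw : vsub c w = vadd (vsub c v) (vsub v w))
      by (apply vec_ext; intros; unfold vadd, vsub; ring).
    pose proof (l1norm_add (vsub c v) (vsub c w)). pose proof (l1norm_add (vsub c v) (vsub v w)).
    rewrite <- Ecw in H2. pose proof (l1norm_close v w 1 Hw). lra. }
  eapply Rle_trans; [apply Hbound|]. rewrite l1norm_sub_sym.
  apply Rle_trans with (B * l1norm (vsub v w) * (2 * l1norm (vsub c v) + INR n)); [|right; ring].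
  apply Rmult_le_compat_l; auto. apply Rmult_le_pos; auto; apply l1norm_ge0.
Qed.

End InnerProduct.

(** * Norms *)

Section Norm.
Variable n : nat.
Variable nX : vec n -> R.
Hypothesis HX : is_norm nX.

Lemma norm_eq0 v : nX v = 0 -> v = vzero.
Proof. apply HX. Qed.
Lemma norm_scale a v : nX (vscale a v) = Rabs a * nX v.
Proof. apply HX. Qed.
Lemma norm_add u v : nX (vadd u v) <= nX u + nX v.
Proof. apply HX. Qed.

Lemma norm_scale_nonneg a v : 0 <= a -> nX (vscale a v) = a * nX v.
Proof. intros; rewrite norm_scale, Rabs_pos_eq; auto. Qed.

Lemma norm_0 : nX vzero = 0.
Proof.
  replace (@vzero n) with (vscale 0 (@vzero n)) by (apply vec_ext; intros; unfold vscale, vzero; ring).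
  rewrite norm_scale_nonneg; lra.
Qed.

Lemma norm_opp v : nX (vscale (-1) v) = nX v.
Proof. rewrite norm_scale, Rabs_left by lra; ring. Qed.

Lemma norm_ge0 v : 0 <= nX v.
Proof.
  pose proof (norm_add v (vscale (-1) v)) as H.
  replace (vadd v (vscale (-1) v)) with (@vzero n) in H
    by (apply vec_ext; intros; unfold vadd, vscale, vzero; ring).
  rewrite norm_0, norm_opp in H. lra.
Qed.

Lemma norm_gt0 v : v <> vzero -> 0 < nX v.
Proof.
  intros Hv. destruct (norm_ge0 v) as [|E]; auto. symmetry in E. apply norm_eq0 in E. contradiction.
Qed.

Lemma norm_sub_sym u v : nX (vsub u v) = nX (vsub v u).
Proof.
  replace (vsub u v) with (vscale (-1) (vsub v u)) by (apply vec_ext; intros; unfold vscale, vsub; ring).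
  apply norm_opp.
Qed.

Lemma norm_sub_ge u v : nX u - nX v <= nX (vsub u v).
Proof.
  pose proof (norm_add (vsub u v) v) as H.
  replace (vadd (vsub u v) v) with u in H by (apply vec_ext; intros; unfold vadd, vsub; ring). lra.
Qed.

Lemma norm_vsum m (g : Fin.t m -> vec n) : nX (vsum m g) <= fin_sum m (fun i => nX (g i)).
Proof.
  induction m.
  - rewrite vsum_O, norm_0. simpl; lra.
  - rewrite vsum_S. eapply Rle_trans; [apply norm_add|].
    specialize (IHm (fun i => g (Fin.FS i))). simpl. lra.
Qed.

Lemma norm_le_l1norm : exists C, 0 <= C /\ forall v, nX v <= C * l1norm v.
Proof.
  exists (fin_sum n (fun i => nX (unit_vec i))).
  split; [apply fin_sum_nonneg; intros; apply norm_ge0|]. intros v.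
  rewrite (vec_unit_decomp v) at 1. eapply Rle_trans; [apply norm_vsum|].
  rewrite Rmult_comm, <- fin_sum_scal. apply fin_sum_le. intros i.
  rewrite norm_scale. apply Rmult_le_compat_r; [apply norm_ge0|apply Rabs_coord_le_l1norm].
Qed.

Lemma norm_continuous : coordwise_continuous nX.
Proof.
  destruct norm_le_l1norm as [C [HC HCv]].
  apply coordwise_continuous_of_lipschitz. intros v. exists C. split; auto. intros w _.
  apply Rabs_le. pose proof (norm_sub_ge v w). pose proof (norm_sub_ge w v).
  rewrite norm_sub_sym in H0. pose proof (HCv (vsub v w)). lra.
Qed.

Lemma l1norm_le_norm : exists m, 0 < m /\ forall v, m * l1norm v <= nX v.
Proof.
  destruct (classic (exists v : vec n, l1norm v = 1)) as [Hsphere|Hno].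
  - destruct (Compactness.coord_min_attained n nX (fun v => l1norm v = 1)) as [v0 [Hv0 Hmin]]; auto.
    + exists 1. intros v Hv i. rewrite <- Hv. apply Rabs_coord_le_l1norm.
    + apply coordwise_closed_eq, l1norm_continuous.
    + apply norm_continuous.
    + exists (nX v0). split.
      { apply norm_gt0. intros ->. assert (l1norm (@vzero n) = 0); [|lra].
        unfold l1norm, vzero. rewrite Rabs_R0, fin_sum_const. ring. }
      intros v. destruct (l1norm_ge0 v) as [Hpos|<-]; [|rewrite Rmult_0_r; apply norm_ge0].
      assert (Hinv : 0 < / l1norm v) by (apply Rinv_0_lt_compat; auto).
      specialize (Hmin (vscale (/ l1norm v) v)).
      rewrite l1norm_scale, norm_scale, Rabs_pos_eq in Hmin by lra.
      assert (nX v0 <= / l1norm v * nX v) by (apply Hmin; field; lra).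
      apply Rmult_le_compat_l with (r := l1norm v) in H; [|lra].
      rewrite <- Rmult_assoc, Rinv_r in H by lra. lra.
  - exists 1. split; [lra|]. intros v. rewrite Rmult_1_l.
    destruct (l1norm_ge0 v) as [Hpos|<-]; [|apply norm_ge0].
    exfalso. apply Hno. exists (vscale (/ l1norm v) v).
    rewrite l1norm_scale, Rabs_pos_eq by (left; apply Rinv_0_lt_compat; auto). field. lra.
Qed.

Lemma norm_ball_bounded x : coordwise_bounded (fun v => nX v <= x).
Proof.
  destruct l1norm_le_norm as [m [Hm Hmv]].
  exists (x / m). intros v Hv i.
  apply Rle_trans with (l1norm v); [apply Rabs_coord_le_l1norm|].
  apply Rmult_le_reg_l with m; auto. unfold Rdiv.
  replace (m * (x * / m)) with x by (field; lra). specialize (Hmv v). lra.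
Qed.

End Norm.

(** * Projections onto norm balls and the dual norm *)

Section Projection.
Variable n : nat.
Variable ip : vec n -> vec n -> R.
Variable nX : vec n -> R.
Hypothesis Hip : is_inner_product ip.
Hypothesis HX : is_norm nX.

Notation P := (projX ip nX).
Notation Y := (dualnorm ip nX).
Notation sqnorm := (sqnorm n ip).

Lemma sqnorm_le_norm_sq : exists K, 0 <= K /\ forall v, sqnorm v <= K * (nX v * nX v).
Proof.
  destruct (Rabs_ip_le n ip Hip) as [B [HB Hbound]].
  destruct (l1norm_le_norm n nX HX) as [m [Hm Hmv]].
  exists (B / (m * m)). split; [apply Rmult_le_pos; auto; left; apply Rinv_0_lt_compat; nra|].
  intros v. pose proof (l1norm_ge0 v) as Hl. pose proof (Hmv v).
  apply Rle_trans with (B * l1norm v * l1norm v); [apply (Rle_trans _ _ _ (Rle_abs _)), Hbound|].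
  replace (B / (m * m) * (nX v * nX v)) with (B * (nX v / m) * (nX v / m)) by (field; lra).
  assert (l1norm v <= nX v / m) by (apply Rmult_le_reg_l with m; auto; unfold Rdiv;
    replace (m * (nX v * / m)) with (nX v) by (field; lra); lra).
  apply Rmult_le_compat; [nra|auto|apply Rmult_le_compat_l|]; auto.
Qed.

Lemma proj_spec c x : 0 <= x ->
  nX (P c x) <= x /\ forall q, nX q <= x -> sqnorm (vsub c (P c x)) <= sqnorm (vsub c q).
Proof.
  intros Hx.
  assert (Hspec : nX (P c x) <= x /\
    forall q, nX q <= x -> norm2 ip (vsub c (P c x)) <= norm2 ip (vsub c q)).
  { unfold projX. apply epsilon_spec.
    destruct (Compactness.coord_min_attained n (fun q => sqnorm (vsub c q)) (fun q => nX q <= x))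
      as [p [Hp Hmin]].
    - exists vzero. rewrite (norm_0 n nX HX); auto.
    - apply (norm_ball_bounded n nX HX).
    - apply coordwise_closed_le, (norm_continuous n nX HX).
    - apply (sqnorm_sub_continuous n ip Hip).
    - exists p. split; auto. intros q Hq. apply (norm2_le_iff n ip Hip). auto. }
  destruct Hspec as [Hle Hmin]. split; auto.
  intros q Hq. apply (norm2_le_iff n ip Hip). auto.
Qed.

Lemma proj_norm_le c x : 0 <= x -> nX (P c x) <= x.
Proof. intros Hx; apply (proj_spec c x Hx). Qed.

Lemma proj_min c x q : nX q <= x -> sqnorm (vsub c (P c x)) <= sqnorm (vsub c q).
Proof.
  intros Hq. assert (Hx : 0 <= x) by (pose proof (norm_ge0 n nX HX q); lra).
  apply (proj_spec c x Hx); auto.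
Qed.

(* The midpoint of two minimisers is admissible, and the parallelogram law forces them to coincide. *)
Lemma proj_unique c x q : nX q <= x ->
  (forall q', nX q' <= x -> sqnorm (vsub c q) <= sqnorm (vsub c q')) -> P c x = q.
Proof.
  intros Hq Hmin. set (p := P c x).
  assert (Hx : 0 <= x) by (pose proof (norm_ge0 n nX HX q); lra).
  pose proof (proj_norm_le c x Hx) as Hp. fold p in Hp.
  pose proof (proj_min c x q Hq) as H1. fold p in H1.
  pose proof (Hmin p Hp) as H2.
  set (z := vscale (/2) (vadd p q)).
  assert (Hz : nX z <= x).
  { unfold z. rewrite (norm_scale_nonneg n nX HX) by lra.
    pose proof (norm_add n nX HX p q). lra. }
  pose proof (proj_min c x z Hz) as H3. fold p in H3.
  replace (vsub c z) with (vadd (vscale (/2) (vsub c p)) (vscale (/2) (vsub c q))) in H3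
    by (apply vec_ext; intros; unfold z, vsub, vadd, vscale; field).
  rewrite (sqnorm_add n ip Hip), !(sqnorm_scale n ip Hip), (ip_scalel n ip Hip),
    (ip_scaler n ip Hip) in H3.
  assert (Hpq : sqnorm (vsub p q) <= 0).
  { replace (vsub p q) with (vsub (vsub c q) (vsub c p)) by (apply vec_ext; intros; unfold vsub; ring).
    rewrite (sqnorm_sub n ip Hip), (ip_sym n ip Hip (vsub c q)). lra. }
  apply (sqnorm_le0 n ip Hip) in Hpq. apply vec_ext; intros i.
  assert (vsub p q i = vzero i) by (rewrite Hpq; auto). unfold vsub, vzero in H. lra.
Qed.

Lemma proj_id c x : nX c <= x -> P c x = c.
Proof.
  intros Hc. apply proj_unique; auto. intros q' _.
  replace (vsub c c) with (@vzero n) by (apply vec_ext; intros; unfold vsub, vzero; ring).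
  rewrite (sqnorm_0 n ip Hip). apply (sqnorm_ge0 n ip Hip).
Qed.

Lemma proj_0 c : P c 0 = vzero.
Proof.
  apply proj_unique; [rewrite (norm_0 n nX HX); lra|]. intros q' Hq'.
  replace q' with (@vzero n); [lra|].
  symmetry. apply (norm_eq0 n nX HX). pose proof (norm_ge0 n nX HX q'). lra.
Qed.

(* Obtained by moving from [P c x] a little towards [q]. *)
Lemma proj_variational c x q : nX q <= x -> ip (vsub c (P c x)) (vsub q (P c x)) <= 0.
Proof.
  intros Hq. assert (Hx : 0 <= x) by (pose proof (norm_ge0 n nX HX q); lra).
  set (p := P c x). set (b := vsub c p). set (d := vsub q p).
  destruct (Rle_lt_dec (ip b d) 0) as [|Hpos]; auto. exfalso.
  pose proof (sqnorm_ge0 n ip Hip d) as Hd.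
  set (t := ip b d / (ip b d + sqnorm d)).
  assert (Ht : t * (ip b d + sqnorm d) = ip b d) by (unfold t; field; lra).
  assert (Ht0 : 0 < t) by (apply Rdiv_lt_0_compat; lra).
  assert (Ht1 : t <= 1) by nra.
  assert (Hz : nX (vadd (vscale (1 - t) p) (vscale t q)) <= x).
  { eapply Rle_trans; [apply (norm_add n nX HX)|].
    rewrite !(norm_scale_nonneg n nX HX) by lra.
    pose proof (proj_norm_le c x Hx). fold p in H. nra. }
  pose proof (proj_min c x _ Hz) as H. fold p b in H.
  replace (vsub c (vadd (vscale (1 - t) p) (vscale t q))) with (vsub b (vscale t d)) in H
    by (apply vec_ext; intros; unfold b, d, vsub, vadd, vscale; ring).
  rewrite (sqnorm_sub n ip Hip), (sqnorm_scale n ip Hip), (ip_scaler n ip Hip) in H.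
  nra.
Qed.

Section Dual.
Hypothesis nontrivial : exists e : vec n, e <> vzero.

Lemma norm_unit_exists : exists u, nX u = 1.
Proof.
  destruct nontrivial as [e He]. pose proof (norm_gt0 n nX HX e He).
  exists (vscale (/ nX e) e). rewrite (norm_scale_nonneg n nX HX) by (left; apply Rinv_0_lt_compat; auto).
  field. lra.
Qed.

Lemma dualnorm_spec v : (exists w, nX w = 1 /\ ip v w = Y v) /\ (forall w, nX w = 1 -> ip v w <= Y v).
Proof.
  unfold dualnorm. apply epsilon_spec.
  destruct (Compactness.coord_min_attained n (fun w => - ip v w) (fun w => nX w = 1)) as [a [Ha Hmin]].
  - apply norm_unit_exists.
  - destruct (norm_ball_bounded n nX HX 1) as [M HM]. exists M. intros w Hw. apply HM. lra.
  - apply coordwise_closed_eq, (norm_continuous n nX HX).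
  - apply coordwise_continuous_opp, (ip_continuous n ip Hip).
  - exists (ip v a). split; [exists a; auto|]. intros w Hw. specialize (Hmin w Hw). lra.
Qed.

Lemma dualnorm_ge v w : nX w = 1 -> ip v w <= Y v.
Proof. apply dualnorm_spec. Qed.

Lemma dualnorm_attained v : exists w, nX w = 1 /\ ip v w = Y v.
Proof. apply dualnorm_spec. Qed.

Lemma dualnorm_ge0 v : 0 <= Y v.
Proof.
  destruct norm_unit_exists as [u Hu].
  pose proof (dualnorm_ge v u Hu). pose proof (dualnorm_ge v (vscale (-1) u)).
  rewrite (norm_opp n nX HX), (ip_scaler n ip Hip) in H0. specialize (H0 Hu). lra.
Qed.

Lemma ip_le_norm_dualnorm v w : ip v w <= nX w * Y v.
Proof.
  destruct (classic (w = vzero)) as [->|Hw].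
  - rewrite (ip_0r n ip Hip), (norm_0 n nX HX). lra.
  - pose proof (norm_gt0 n nX HX w Hw) as Hpos.
    pose proof (dualnorm_ge v (vscale (/ nX w) w)) as H.
    rewrite (norm_scale_nonneg n nX HX), (ip_scaler n ip Hip) in H
      by (left; apply Rinv_0_lt_compat; auto).
    assert (H1 : / nX w * ip v w <= Y v) by (apply H; field; lra).
    apply Rmult_le_compat_l with (r := nX w) in H1; [|lra].
    rewrite <- Rmult_assoc, Rinv_r in H1 by lra. lra.
Qed.

Lemma dualnorm_add u v : Y (vadd u v) <= Y u + Y v.
Proof.
  destruct (dualnorm_attained (vadd u v)) as [w [Hw <-]]. rewrite (ip_addl n ip Hip).
  pose proof (dualnorm_ge u w Hw). pose proof (dualnorm_ge v w Hw). lra.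
Qed.

Lemma proj_residual_align c x : 0 <= x ->
  x * Y (vsub c (P c x)) <= ip (vsub c (P c x)) (P c x).
Proof.
  intros Hx. set (p := P c x). set (b := vsub c p).
  destruct (dualnorm_attained b) as [u [Hu Eu]].
  assert (Hq : nX (vscale x u) <= x) by (rewrite (norm_scale_nonneg n nX HX), Hu by auto; lra).
  pose proof (proj_variational c x _ Hq) as H. fold p b in H.
  rewrite (ip_subr n ip Hip), (ip_scaler n ip Hip), Eu in H. lra.
Qed.

Lemma proj_residual_dualnorm_slack c x : 0 <= x -> nX (P c x) < x -> Y (vsub c (P c x)) = 0.
Proof.
  intros Hx Hlt. pose proof (proj_residual_align c x Hx).
  pose proof (ip_le_norm_dualnorm (vsub c (P c x)) (P c x)).
  pose proof (dualnorm_ge0 (vsub c (P c x))). nra.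
Qed.

Lemma sqnorm_proj_sub_le c x1 x2 : 0 <= x1 -> 0 <= x2 ->
  sqnorm (vsub (P c x1) (P c x2)) <=
  sqnorm (vsub c (P c x2)) - sqnorm (vsub c (P c x1)) - 2 * (x1 - x2) * Y (vsub c (P c x1)).
Proof.
  intros Hx1 Hx2. set (a1 := P c x1). set (a2 := P c x2). set (b1 := vsub c a1).
  replace (vsub c a2) with (vadd b1 (vsub a1 a2)) by (apply vec_ext; intros; unfold b1, vsub, vadd; ring).
  rewrite (sqnorm_add n ip Hip), (ip_subr n ip Hip).
  pose proof (proj_residual_align c x1 Hx1) as Halign. fold a1 b1 in Halign.
  pose proof (ip_le_norm_dualnorm b1 a2).
  assert (nX a2 * Y b1 <= x2 * Y b1)
    by (apply Rmult_le_compat_r; [apply dualnorm_ge0|apply proj_norm_le; auto]).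
  lra.
Qed.

Lemma proj_is_X2_decomp c s : nX (P c s) = s -> is_decomp nX (norm2 ip) c (P c s) (vsub c (P c s)).
Proof.
  intros Hs. set (a := P c s). set (b := vsub c a).
  split; [apply vec_ext; intros; unfold b, vadd, vsub; ring|].
  intros a' b' Hab.
  assert (Eb' : b' = vsub c a') by (rewrite <- Hab; apply vec_ext; intros; unfold vsub, vadd; ring).
  destruct (Rlt_le_dec (nX a) (nX a')) as [|Ha']; [left; lra|].
  destruct (Rlt_le_dec (norm2 ip b) (norm2 ip b')) as [|Hb']; [right; left; lra|].
  apply (norm2_le_iff n ip Hip) in Hb'. fold a in Hs.
  assert (Ea' : a = a').
  { apply proj_unique; [lra|]. intros q' Hq'. rewrite <- Eb'.
    pose proof (proj_min c s q' Hq'). fold a b in H. lra. }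
  right; right. subst a' b'. split; reflexivity.
Qed.

Lemma tight_residual_dualnorm_min c s q : tight ip nX c -> 0 <= s -> nX q <= s ->
  Y (vsub c (P c s)) <= Y (vsub c q).
Proof.
  intros Hc Hs Hq. destruct (Rle_lt_or_eq_dec _ _ (proj_norm_le c s Hs)) as [Hlt|Heq].
  - rewrite proj_residual_dualnorm_slack by auto. apply dualnorm_ge0.
  - destruct (Hc _ _ (proj_is_X2_decomp c s Heq)) as [_ Hdec].
    destruct (Hdec q (vsub c q)) as [H|[H|[_ H]]]; try lra.
    apply vec_ext; intros; unfold vadd, vsub; ring.
Qed.

Definition res_sqnorm v t := sqnorm (vsub v (P v t)).
Definition res_dualnorm v t := Y (vsub v (P v t)).

Section ResidualSteps.
Variable K : R.
Hypothesis HK0 : 0 <= K.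
Hypothesis HK : forall v, sqnorm v <= K * (nX v * nX v).

(* Up to O(D^2), [t |-> res_sqnorm v t] has derivative [-2 res_dualnorm v t]:
   these are its one-sided difference bounds. *)
Lemma res_sqnorm_step_le v t D : 0 <= t -> 0 <= D ->
  res_sqnorm v (t + D) <= res_sqnorm v t - 2 * D * res_dualnorm v t + K * (D * D).
Proof.
  intros Ht HD. unfold res_sqnorm, res_dualnorm. set (p := P v t). set (b := vsub v p).
  destruct (dualnorm_attained b) as [u [Hu Eu]].
  assert (Hq : nX (vadd p (vscale D u)) <= t + D).
  { eapply Rle_trans; [apply (norm_add n nX HX)|]. rewrite (norm_scale_nonneg n nX HX), Hu by auto.
    pose proof (proj_norm_le v t Ht). fold p in H. lra. }
  pose proof (proj_min v (t + D) _ Hq) as H.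
  replace (vsub v (vadd p (vscale D u))) with (vsub b (vscale D u)) in H
    by (apply vec_ext; intros; unfold b, vsub, vadd, vscale; ring).
  rewrite (sqnorm_sub n ip Hip b), (sqnorm_scale n ip Hip), (ip_scaler n ip Hip), Eu in H.
  pose proof (HK u). rewrite Hu in H0.
  assert (D * D * sqnorm u <= D * D * K) by (apply Rmult_le_compat_l; nra).
  lra.
Qed.

Lemma res_sqnorm_step_ge v t D : 0 <= t -> 0 < D ->
  res_sqnorm v t <= res_sqnorm v (t + D) + 2 * D * res_dualnorm v (t + D) + K * (D * D).
Proof.
  intros Ht HD. unfold res_sqnorm, res_dualnorm. set (p := P v (t + D)). set (b := vsub v p).
  set (lam := t / (t + D)).
  assert (Hlam : 1 - lam = D / (t + D)) by (unfold lam; field; lra).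
  assert (Hlam0 : 0 <= lam) by (unfold lam; apply Rmult_le_pos; [lra|left; apply Rinv_0_lt_compat; lra]).
  assert (Hlam1 : 0 <= 1 - lam) by (rewrite Hlam; apply Rmult_le_pos; [lra|left; apply Rinv_0_lt_compat; lra]).
  assert (Hscale : (1 - lam) * (t + D) = D) by (rewrite Hlam; field; lra).
  pose proof (proj_norm_le v (t + D) ltac:(lra)) as Hp. fold p in Hp.
  assert (Hq : nX (vscale lam p) <= t).
  { rewrite (norm_scale_nonneg n nX HX) by auto.
    assert (lam * (t + D) = t) by (unfold lam; field; lra). nra. }
  pose proof (proj_min v t _ Hq) as H.
  replace (vsub v (vscale lam p)) with (vadd b (vscale (1 - lam) p)) in H
    by (apply vec_ext; intros; unfold b, vsub, vadd, vscale; ring).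
  rewrite (sqnorm_add n ip Hip b), (sqnorm_scale n ip Hip), (ip_scaler n ip Hip) in H.
  pose proof (ip_le_norm_dualnorm b p). pose proof (dualnorm_ge0 b). pose proof (HK p).
  pose proof (norm_ge0 n nX HX p).
  assert (Hip_bp : (1 - lam) * ip b p <= D * Y b).
  { rewrite <- Hscale, Rmult_assoc. apply Rmult_le_compat_l; auto. nra. }
  assert (Hsq : (1 - lam) * (1 - lam) * sqnorm p <= K * (D * D)).
  { rewrite <- Hscale. apply Rle_trans with ((1 - lam) * (1 - lam) * (K * (nX p * nX p)));
      [apply Rmult_le_compat_l; nra|].
    apply Rle_trans with ((1 - lam) * (1 - lam) * (K * ((t + D) * (t + D)))); [|right; ring].
    apply Rmult_le_compat_l; [nra|]. apply Rmult_le_compat_l; auto. nra. }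
  lra.
Qed.

Lemma shrink_gap_step c x1 t D : tight ip nX c -> 0 <= x1 -> 0 <= t -> 0 < D ->
  res_sqnorm c (x1 + t) - res_sqnorm (vsub c (P c x1)) t
  - (res_sqnorm c (x1 + (t + D)) - res_sqnorm (vsub c (P c x1)) (t + D)) <= 2 * K * (D * D).
Proof.
  intros Hc Hx1 Ht HD. set (a1 := P c x1). set (b1 := vsub c a1).
  rewrite <- Rplus_assoc.
  pose proof (res_sqnorm_step_ge c (x1 + t) D ltac:(lra) HD).
  pose proof (res_sqnorm_step_le b1 t D Ht ltac:(lra)).
  assert (res_dualnorm c (x1 + t + D) <= res_dualnorm b1 t).
  { unfold res_dualnorm.
    replace (vsub b1 (P b1 t)) with (vsub c (vadd a1 (P b1 t)))
      by (apply vec_ext; intros; unfold b1, vsub, vadd; ring).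
    apply tight_residual_dualnorm_min; auto; [lra|].
    eapply Rle_trans; [apply (norm_add n nX HX)|].
    pose proof (proj_norm_le c x1 Hx1). pose proof (proj_norm_le b1 t Ht). fold a1 in H1. lra. }
  nra.
Qed.

Lemma proj_gap_step c x1 s D : tight ip nX c -> 0 <= s -> 0 < D ->
  res_sqnorm c s - res_sqnorm (P c x1) s + 2 * s * res_dualnorm c x1
  - (res_sqnorm c (s + D) - res_sqnorm (P c x1) (s + D) + 2 * (s + D) * res_dualnorm c x1)
  <= 2 * K * (D * D).
Proof.
  intros Hc Hs HD. set (a1 := P c x1).
  pose proof (res_sqnorm_step_ge c s D Hs HD).
  pose proof (res_sqnorm_step_le a1 s D Hs ltac:(lra)).
  assert (res_dualnorm c (s + D) <= res_dualnorm c x1 + res_dualnorm a1 s).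
  { unfold res_dualnorm. fold a1. eapply Rle_trans.
    - apply (tight_residual_dualnorm_min c (s + D) (P a1 s)); auto; [lra|].
      pose proof (proj_norm_le a1 s Hs). lra.
    - replace (vsub c (P a1 s)) with (vadd (vsub c a1) (vsub a1 (P a1 s)))
        by (apply vec_ext; intros; unfold vsub, vadd; ring).
      apply dualnorm_add. }
  nra.
Qed.

End ResidualSteps.

End Dual.
End Projection.

(* Telescoping over [N] steps of length [y / N] bounds the total decrease by [K y^2 / N]. *)
Lemma nondecreasing_of_quadratic_steps (u : R -> R) K : 0 <= K ->
  (forall t D, 0 <= t -> 0 < D -> u t - u (t + D) <= K * (D * D)) ->
  forall y, 0 <= y -> u 0 <= u y.
Proof.
  intros HK Hstep y Hy.
  assert (Htel : forall N : nat, (0 < N)%nat -> u 0 - u y <= K * (y * y) * / INR N).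
  { intros N HN. pose proof (lt_0_INR N HN) as HNpos. set (D := y / INR N).
    assert (HD : 0 <= D) by (apply Rmult_le_pos; auto; left; apply Rinv_0_lt_compat; auto).
    assert (Hk : forall k : nat, u 0 - u (INR k * D) <= INR k * (K * (D * D))).
    { induction k.
      - simpl. rewrite Rmult_0_l. lra.
      - rewrite S_INR. destruct HD as [HD|HD].
        + pose proof (Hstep (INR k * D) D ltac:(pose proof (pos_INR k); nra) HD).
          replace ((INR k + 1) * D) with (INR k * D + D) by ring. lra.
        + rewrite <- HD in *. rewrite !Rmult_0_r in *. lra. }
    specialize (Hk N).
    replace (INR N * D) with y in Hk by (unfold D; field; lra).
    replace (K * (y * y) * / INR N) with (INR N * (K * (D * D))) by (unfold D; field; lra).
    exact Hk. }
  destruct (Rle_lt_dec (u 0) (u y)) as [|Hlt]; auto. exfalso.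
  set (g := u 0 - u y). assert (Hg : 0 < g) by (unfold g; lra).
  destruct (archimed_cor1 (g / (K * (y * y) + 1))) as [N [HN HN0]].
  { apply Rdiv_lt_0_compat; nra. }
  specialize (Htel N HN0). fold g in Htel.
  assert (K * (y * y) * / INR N <= K * (y * y) * (g / (K * (y * y) + 1))) by (apply Rmult_le_compat_l; nra).
  assert (K * (y * y) * (g / (K * (y * y) + 1)) < g).
  { apply Rmult_lt_reg_r with (K * (y * y) + 1); [nra|].
    unfold Rdiv. replace (K * (y * y) * (g * / (K * (y * y) + 1)) * (K * (y * y) + 1)) with (K * (y * y) * g)
      by (field; nra). nra. }
  lra.
Qed.

Section Tight.
Variable n : nat.
Variable ip : vec n -> vec n -> R.
Variable nX : vec n -> R.
Hypothesis Hip : is_inner_product ip.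
Hypothesis HX : is_norm nX.
Hypothesis nontrivial : exists e : vec n, e <> vzero.
Variable c : vec n.
Hypothesis Hc : tight ip nX c.

Notation P := (projX ip nX).
Notation res_sqnorm := (res_sqnorm n ip nX).

Lemma shrink_shrink x1 y : 0 <= x1 -> 0 <= y ->
  shrinkX ip nX (shrinkX ip nX c x1) y = shrinkX ip nX c (x1 + y).
Proof.
  intros Hx1 Hy. unfold shrinkX.
  destruct (sqnorm_le_norm_sq n ip nX Hip HX) as [K [HK0 HK]].
  set (a1 := P c x1). set (b1 := vsub c a1). set (a2 := P b1 y).
  assert (Hgap : res_sqnorm c (x1 + 0) - res_sqnorm b1 0 <= res_sqnorm c (x1 + y) - res_sqnorm b1 y).
  { apply (nondecreasing_of_quadratic_steps (fun t => res_sqnorm c (x1 + t) - res_sqnorm b1 t) (2 * K));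
      auto; [lra|].
    intros t D Ht HD. apply (shrink_gap_step n ip nX Hip HX nontrivial K HK0 HK); auto. }
  assert (Hstart : res_sqnorm c (x1 + 0) = res_sqnorm b1 0).
  { unfold res_sqnorm. rewrite Rplus_0_r, (proj_0 n ip nX Hip HX). fold a1 b1. f_equal.
    apply vec_ext; intros; unfold vsub, vzero; ring. }
  assert (HP : P c (x1 + y) = vadd a1 a2).
  { apply (proj_unique n ip nX Hip HX).
    - eapply Rle_trans; [apply (norm_add n nX HX)|].
      pose proof (proj_norm_le n ip nX Hip HX c x1 Hx1). pose proof (proj_norm_le n ip nX Hip HX b1 y Hy).
      fold a1 in H. fold a2 in H0. lra.
    - intros q Hq. replace (vsub c (vadd a1 a2)) with (vsub b1 a2)
        by (apply vec_ext; intros; unfold b1, vsub, vadd; ring).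
      pose proof (proj_min n ip nX Hip HX c (x1 + y) q Hq). unfold res_sqnorm in Hgap, Hstart. fold a2 in Hgap. lra. }
  rewrite HP. apply vec_ext; intros; unfold b1, vsub, vadd; ring.
Qed.

Lemma proj_proj x1 x2 : 0 <= x1 -> 0 <= x2 -> P (P c x1) x2 = P c (Rmin x1 x2).
Proof.
  intros Hx1 Hx2. destruct (Rle_lt_dec x1 x2) as [Hle|Hlt].
  { rewrite Rmin_left by auto. apply (proj_id n ip nX Hip HX).
    pose proof (proj_norm_le n ip nX Hip HX c x1 Hx1). lra. }
  rewrite Rmin_right by lra.
  destruct (sqnorm_le_norm_sq n ip nX Hip HX) as [K [HK0 HK]].
  set (a1 := P c x1). set (h1 := res_dualnorm n ip nX c x1).
  set (G := fun s => res_sqnorm c s - res_sqnorm a1 s + 2 * s * h1).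
  assert (Hgap : G (x2 + 0) <= G (x2 + (x1 - x2))).
  { apply (nondecreasing_of_quadratic_steps (fun t => G (x2 + t)) (2 * K)); [lra| |lra].
    intros t D Ht HD. unfold G. rewrite <- Rplus_assoc.
    apply (proj_gap_step n ip nX Hip HX nontrivial K HK0 HK); auto; lra. }
  replace (x2 + 0) with x2 in Hgap by ring. replace (x2 + (x1 - x2)) with x1 in Hgap by ring.
  assert (Hend : res_sqnorm a1 x1 = 0).
  { unfold res_sqnorm. rewrite (proj_id n ip nX Hip HX) by (apply (proj_norm_le n ip nX Hip HX); auto).
    replace (vsub a1 a1) with (@vzero n) by (apply vec_ext; intros; unfold vsub, vzero; ring).
    apply (sqnorm_0 n ip Hip). }
  pose proof (sqnorm_proj_sub_le n ip nX Hip HX nontrivial c x1 x2 Hx1 Hx2) as Hdist.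
  apply (proj_unique n ip nX Hip HX); [apply (proj_norm_le n ip nX Hip HX); auto|].
  intros q Hq. pose proof (proj_min n ip nX Hip HX a1 x2 q Hq).
  unfold G, res_sqnorm, res_dualnorm in *. subst G h1 a1. lra.
Qed.

End Tight.

Theorem proposition2p11 (n : nat) (ip : vec n -> vec n -> R) (nX : vec n -> R)
  (Hip : is_inner_product ip) (HX : is_norm nX)
  (c : vec n) (Hc : tight ip nX c) (x1 x2 : R) (Hx1 : 0 <= x1) (Hx2 : 0 <= x2) :
  projX ip nX (projX ip nX c x1) x2 = projX ip nX c (Rmin x1 x2) /\
  shrinkX ip nX (shrinkX ip nX c x1) x2 = shrinkX ip nX c (x1 + x2).
Proof.
  destruct n as [|k].
  - split; apply vec_ext; intros i; inversion i.
  - assert (nontrivial : exists e : vec (S k), e <> vzero).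
    { exists (fun _ => 1). intros E. apply (f_equal (fun v : vec (S k) => v Fin.F1)) in E.
      unfold vzero in E. lra. }
    split.
    + apply (proj_proj (S k) ip nX Hip HX nontrivial c Hc); auto.
    + apply (shrink_shrink (S k) ip nX Hip HX nontrivial c Hc); auto.
Qed.
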